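(* Fix real $C_1,C_2$ with $2C_1+C_2>0$ and fix $C_3\in(0,C_{3,crit})$. Then the period function $b\mapsto\mathfrak L(C_1,C_2,C_3,b)$ is strictly increasing on $(b_-(C_3),b_+(C_3))$.
   Context: Let $\alpha>0$ and real constants $C_1,C_2$ be given. Travelling wave profiles $\phi$ of the DGH equation satisfy, for real constants $b$ and $C_3$, (E1) $\alpha^2(\phi-C_1)\phi''+\frac12\alpha^2(\phi')^2+(C_1-C_2-\frac32\phi)\phi=b$, and the first integral (E2) $\alpha^2(\phi-C_1)(\phi')^2+(C_1-C_2)\phi^2-\phi^3-2b\phi+C_1(2b+C_1C_2)=C_3$. Let $C_{3,crit}=\frac1{27}(2C_1+C_2)^3$. For $C_3\in(0,C_{3,crit})$, let $\phi_1<\phi_2<\phi_3$ be the roots of $2(\phi-C_1)^2(\phi+\frac{C_2}2)=C_3$; they satisfy $-\frac{C_2}{2}<\phi_1<\frac{C_1-C_2}{3}<\phi_2<C_1<\phi_3$. Let $U(\phi)=-\frac12\phi^2-\frac12C_2\phi-\frac12C_1C_2-\frac{C_3}{2(\phi-C_1)}$, so that with $z=\xi/\alpha$ (E2) reads $b=\frac12(d\phi/dz)^2+U(\phi)$. Set $b_-(C_3)=U(\phi_2)$ and $b_+(C_3)=U(\phi_1)$. For $b\in(b_-(C_3),b_+(C_3))$, let $\phi_-<\phi_+$ be the two solutions of $U(\phi)=b$ with $\phi_1<\phi_-<\phi_2<\phi_+<C_1$. The period function (the $z$-period of the corresponding periodic orbit) is $$\mathfrak L(C_1,C_2,C_3,b)=2\int_{\phi_-}^{\phi_+}\frac{d\phi}{\sqrt{2(b-U(\phi))}}.$$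 *)

From Stdlib Require Import Reals.
From Coquelicot Require Import Coquelicot.
Open Scope R_scope.

Definition U (C1 C2 C3 phi : R) : R :=
  - / 2 * phi ^ 2 - / 2 * C2 * phi - / 2 * C1 * C2 - C3 / (2 * (phi - C1)).

Definition cubicP (C1 C2 phi : R) : R := 2 * (phi - C1) ^ 2 * (phi + C2 / 2).

Definition C3crit (C1 C2 : R) : R := / 27 * (2 * C1 + C2) ^ 3.

Definition period_integrand (C1 C2 C3 b phi : R) : R :=
  / sqrt (2 * (b - U C1 C2 C3 phi)).

Definition period (C1 C2 C3 b phim phip : R) : R :=
  2 * RInt_gen (period_integrand C1 C2 C3 b) (at_right phim) (at_left phip).

Definition turning_points (C1 C2 C3 phi1 phi2 b phim phip : R) : Prop :=
  phi1 < phim < phi2 /\ phi2 < phip < C1 /\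
  U C1 C2 C3 phim = b /\ U C1 C2 C3 phip = b.

(* In the variable y = C1 - phi, 2 y (b - U) is the cubic (y - p)(y - q)(y - r) with
   roots 0 < p < q < r (the turning points are C1 - q < C1 - p) and p q r = C3, so half the
   period is the integral of 1 / sqrt ((y - p)(q - y)(r - y) / y) over (p, q).  The
   substitution y = chord p q (2 w / (1 + w^2)), w in [-1, 1], removes both endpoint
   singularities and leaves the integral of 2 / (1 + w^2) F (y / r) with F t = sqrt (t / (1 - t)),
   which depends only on x1 = p / r and x2 = q / r.  Pairing w with -w, the integrand becomes
   increasing in x2 and in x1 x2 (a derivative computation along the hyperbolas
   x1 x2 = const).  Raising b raises q and lowers r, hence raises both x2 = q / r and
   x1 x2 = C3 / r^3. *)

From Stdlib Require Import Reals Lra Psatz.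
From Coquelicot Require Import Coquelicot.
Open Scope R_scope.

Definition sqrt_odds (y : R) : R := sqrt (y / (1 - y)).

Definition sqrt_odds_deriv (y : R) : R := sqrt_odds y / (2 * y * (1 - y)).

Definition chord (x1 x2 s : R) : R := (1 - s) / 2 * x1 + (1 + s) / 2 * x2.

Definition odds_pair (s x1 x2 : R) : R :=
  sqrt_odds (chord x1 x2 s) + sqrt_odds (chord x1 x2 (- s)).

Lemma sqrt_odds_lt a b : 0 <= a -> a < b -> b < 1 -> sqrt_odds a < sqrt_odds b.
Proof.
  intros Ha Hab Hb. unfold sqrt_odds. apply sqrt_lt_1_alt. split.
  - apply Rdiv_le_0_compat; lra.
  - assert (E : b / (1 - b) - a / (1 - a) = (b - a) / ((1 - a) * (1 - b))) by (field; lra).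
    assert (0 < (b - a) / ((1 - a) * (1 - b))) by (apply Rdiv_lt_0_compat; nra).
    lra.
Qed.

Lemma sqrt_odds_le a b : 0 <= a -> a <= b -> b < 1 -> sqrt_odds a <= sqrt_odds b.
Proof.
  intros Ha Hab Hb. destruct (Req_dec a b) as [->|Hne]; [lra|].
  left. apply sqrt_odds_lt; lra.
Qed.

Lemma sqrt_odds_pos y : 0 < y < 1 -> 0 < sqrt_odds y.
Proof. intros Hy. apply sqrt_lt_R0, Rdiv_lt_0_compat; lra. Qed.

Lemma is_derive_sqrt_odds y : 0 < y < 1 -> is_derive sqrt_odds y (sqrt_odds_deriv y).
Proof.
  intros Hy. unfold sqrt_odds_deriv, sqrt_odds.
  assert (Hpos : 0 < y / (1 - y)) by (apply Rdiv_lt_0_compat; lra).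
  assert (Hsq := sqrt_sqrt _ (Rlt_le _ _ Hpos)).
  assert (Hsq0 := sqrt_lt_R0 _ Hpos).
  auto_derive; change (y * / (1 + - y)) with (y / (1 - y)).
  - repeat split; lra.
  - set (S := sqrt (y / (1 - y))) in *.
    replace (S / (2 * y * (1 - y))) with (S * S / (2 * S * y * (1 - y))) by (field; lra).
    rewrite Hsq. field. lra.
Qed.

Lemma is_derive_sqrt_odds_comp (g : R -> R) t dg : is_derive g t dg -> 0 < g t < 1 ->
  is_derive (fun t => sqrt_odds (g t)) t (dg * sqrt_odds_deriv (g t)).
Proof. intros Hg Hgt. apply (is_derive_comp sqrt_odds g); [apply is_derive_sqrt_odds|]; easy. Qed.

(* [sqrt_odds_deriv y = g y / y] with [g y = sqrt_odds y / (2 (1 - y))] increasing, so a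
   negative weight on the smaller point is beaten by the positive weight on the larger one. *)
Lemma sqrt_odds_deriv_comb_pos ym yp cp cm : 0 < ym <= yp -> yp < 1 -> 0 < cp ->
  0 < cp * ym + cm * yp -> 0 < cp * sqrt_odds_deriv yp + cm * sqrt_odds_deriv ym.
Proof.
  intros Hm Hp Hcp Hcomb. unfold sqrt_odds_deriv.
  set (gp := sqrt_odds yp / (2 * (1 - yp))). set (gm := sqrt_odds ym / (2 * (1 - ym))).
  assert (Hgm : 0 < gm) by (apply Rdiv_lt_0_compat; [apply sqrt_odds_pos|]; lra).
  assert (Hgmp : gm <= gp).
  { unfold gm, gp. apply Rmult_le_compat.
    - apply sqrt_pos.
    - left; apply Rinv_0_lt_compat; lra.
    - apply sqrt_odds_le; lra.
    - apply Rinv_le_contravar; lra. }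
  replace (cp * (sqrt_odds yp / (2 * yp * (1 - yp))) + cm * (sqrt_odds ym / (2 * ym * (1 - ym))))
    with (gp * cp / yp + gm * cm / ym) by (unfold gp, gm; field; lra).
  destruct (Rle_or_lt 0 cm) as [Hcm | Hcm].
  - assert (0 < gp * cp / yp) by (apply Rdiv_lt_0_compat; nra).
    assert (0 <= gm * cm / ym) by (apply Rdiv_le_0_compat; nra).
    lra.
  - assert (Hgap : gp * cm / ym <= gm * cm / ym).
    { unfold Rdiv. apply Rmult_le_compat_r; [left; apply Rinv_0_lt_compat; lra | nra]. }
    assert (E : gp * cp / yp + gp * cm / ym = gp * (cp * ym + cm * yp) / (yp * ym))
      by (field; lra).
    assert (0 < gp * (cp * ym + cm * yp) / (yp * ym)) by (apply Rdiv_lt_0_compat; nra).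
    lra.
Qed.

Lemma odds_pair_lt_mono s x1 x2 x1' x2' : -1 < s < 1 -> 0 < x1 <= x1' -> 0 < x2 <= x2' ->
  x1' < 1 -> x2' < 1 -> (x1 < x1' \/ x2 < x2') -> odds_pair s x1 x2 < odds_pair s x1' x2'.
Proof.
  intros Hs Hx1 Hx2 Hx1' Hx2' Hlt. unfold odds_pair, chord.
  apply Rplus_lt_compat; apply sqrt_odds_lt; destruct Hlt; nra.
Qed.

Lemma ratio_unit a b : 0 < a < b -> 0 < a / b < 1.
Proof.
  intros Hab. split; [apply Rdiv_lt_0_compat; lra|].
  apply Rmult_lt_reg_r with b; [lra|]. unfold Rdiv. rewrite Rmult_assoc, Rinv_l; lra.
Qed.

Lemma chord_hyperbola s k t : t <> 0 ->
  chord (k / t) t s = t * ((1 + s) / 2 + (1 - s) / 2 * (k / (t * t))).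
Proof. intros Ht. unfold chord. field. exact Ht. Qed.

Lemma is_derive_odds_pair_hyperbola s k t : -1 < s < 1 -> 0 < k < t * t -> 0 < t < 1 ->
  is_derive (fun t => odds_pair s (k / t) t) t
    (((1 + s) / 2 - (1 - s) / 2 * (k / (t * t))) * sqrt_odds_deriv (chord (k / t) t s)
     + ((1 - s) / 2 - (1 + s) / 2 * (k / (t * t))) * sqrt_odds_deriv (chord (k / t) t (- s))).
Proof.
  intros Hs Hk Ht.
  assert (Hmu := ratio_unit k (t * t) Hk).
  assert (Hchord : forall s', -1 < s' < 1 -> 0 < chord (k / t) t s' < 1).
  { intros s' Hs'. rewrite chord_hyperbola by lra.
    assert (0 < (1 + s') / 2 + (1 - s') / 2 * (k / (t * t)) < 1) by nra. split; nra. }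
  unfold odds_pair. apply @is_derive_plus.
  - apply (is_derive_sqrt_odds_comp (fun t => chord (k / t) t s)); [|apply Hchord; lra].
    unfold chord. auto_derive; [lra | field; lra].
  - apply (is_derive_sqrt_odds_comp (fun t => chord (k / t) t (- s))); [|apply Hchord; lra].
    unfold chord. auto_derive; [lra | field; lra].
Qed.

Lemma odds_pair_hyperbola_lt s k t1 t2 : 0 < s < 1 -> 0 < k < t1 * t1 -> 0 < t1 < t2 -> t2 < 1 ->
  odds_pair s (k / t1) t1 < odds_pair s (k / t2) t2.
Proof.
  intros Hs Hk Ht Ht2.
  eapply (incr_function_le (fun t => odds_pair s (k / t) t) t1 t2); simpl;
    [intros t Ht1 Ht2'; apply is_derive_odds_pair_hyperbola; nra | | lra ..].
  intros t Ht1 Ht2'.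
  set (al := (1 + s) / 2). set (be := (1 - s) / 2). set (mu := k / (t * t)).
  assert (Hmu : 0 < mu < 1) by (apply ratio_unit; nra).
  assert (0 < al) by (unfold al; lra). assert (0 < be) by (unfold be; lra).
  assert (al - be = s) by (unfold al, be; field). assert (al + be = 1) by (unfold al, be; field).
  assert (Ep : chord (k / t) t s = t * (al + be * mu)) by (apply chord_hyperbola; lra).
  assert (Em : chord (k / t) t (- s) = t * (be + al * mu))
    by (rewrite chord_hyperbola by lra; unfold al, be, mu; field; lra).
  apply Rlt_gt, sqrt_odds_deriv_comb_pos; rewrite ?Ep, ?Em; fold mu.
  - split; [apply Rmult_lt_0_compat; nra|]. apply Rmult_le_compat_l; nra.
  - assert (al + be * mu < 1) by nra. nra.
  - nra.
  - replace ((al - be * mu) * (t * (be + al * mu)) + (be - al * mu) * (t * (al + be * mu)))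
      with (2 * al * be * t * (1 - mu * mu)) by ring.
    assert (0 < 1 - mu * mu) by nra.
    repeat apply Rmult_lt_0_compat; lra.
Qed.

(* Move first along the hyperbola [x1 * x2 = const] to [x2'], then increase [x1]. *)
Lemma odds_pair_lt s x1 x2 x1' x2' : 0 < s < 1 -> 0 < x1 < x2 -> 0 < x1' < x2' -> x2' < 1 ->
  x2 < x2' -> x1 * x2 < x1' * x2' -> odds_pair s x1 x2 < odds_pair s x1' x2'.
Proof.
  intros Hs Hx Hx' Hx2' H2 H12.
  destruct (Rle_or_lt x1 x1') as [Hle | Hlt].
  - apply odds_pair_lt_mono; lra.
  - set (k := x1 * x2).
    assert (Ek : k / x2 = x1) by (unfold k; field; lra).
    assert (Hhyp : odds_pair s (k / x2) x2 < odds_pair s (k / x2') x2')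
      by (apply odds_pair_hyperbola_lt; unfold k; nra).
    rewrite Ek in Hhyp.
    assert (Hk' : k / x2' < x1').
    { apply Rmult_lt_reg_r with x2'; [lra|].
      unfold Rdiv. rewrite Rmult_assoc, Rinv_l by lra. unfold k; lra. }
    assert (0 < k / x2') by (apply Rdiv_lt_0_compat; unfold k; nra).
    assert (odds_pair s (k / x2') x2' < odds_pair s x1' x2') by (apply odds_pair_lt_mono; lra).
    lra.
Qed.

(* The rational parametrization [s = sin (2 atan w)] of [[-1, 1]] and its inverse
   [w = tan (asin z / 2)]. *)
Definition sin2atan (w : R) : R := 2 * w / (1 + w ^ 2).

Definition tan_half_asin (z : R) : R := z / (1 + sqrt (1 - z ^ 2)).

Definition period_kernel (x1 x2 w : R) : R :=
  2 / (1 + w ^ 2) * sqrt_odds (chord x1 x2 (sin2atan w)).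

Lemma sin2atan_bound w : -1 <= sin2atan w <= 1.
Proof.
  unfold sin2atan. assert (0 < 1 + w ^ 2) by nra.
  assert (E1 : 2 * w / (1 + w ^ 2) + 1 = (w + 1) ^ 2 / (1 + w ^ 2)) by (field; lra).
  assert (E2 : 1 - 2 * w / (1 + w ^ 2) = (w - 1) ^ 2 / (1 + w ^ 2)) by (field; lra).
  assert (0 <= (w + 1) ^ 2 / (1 + w ^ 2)) by (apply Rdiv_le_0_compat; [apply pow2_ge_0 | lra]).
  assert (0 <= (w - 1) ^ 2 / (1 + w ^ 2)) by (apply Rdiv_le_0_compat; [apply pow2_ge_0 | lra]).
  lra.
Qed.

Lemma sin2atan_unit w : 0 < w < 1 -> 0 < sin2atan w < 1.
Proof.
  intros Hw. unfold sin2atan. assert (0 < 1 + w ^ 2) by nra. split.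
  - apply Rdiv_lt_0_compat; lra.
  - assert (E : 1 - 2 * w / (1 + w ^ 2) = (w - 1) ^ 2 / (1 + w ^ 2)) by (field; lra).
    assert (0 < (w - 1) ^ 2 / (1 + w ^ 2)) by (apply Rdiv_lt_0_compat; nra).
    lra.
Qed.

Lemma sqr_tan_half_asin z : -1 <= z <= 1 ->
  1 + tan_half_asin z ^ 2 = 2 / (1 + sqrt (1 - z ^ 2)).
Proof.
  intros Hz. unfold tan_half_asin.
  assert (H0 : 0 <= 1 - z ^ 2) by nra.
  assert (Hs := sqrt_sqrt _ H0). assert (Hp := sqrt_pos (1 - z ^ 2)).
  set (S := sqrt (1 - z ^ 2)) in *.
  field_simplify_eq; [|lra]. replace (z ^ 2) with (1 - S * S) by lra. ring.
Qed.

Lemma sin2atan_tan_half_asin z : -1 <= z <= 1 -> sin2atan (tan_half_asin z) = z.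
Proof.
  intros Hz. unfold sin2atan. rewrite sqr_tan_half_asin by exact Hz.
  unfold tan_half_asin. assert (Hp := sqrt_pos (1 - z ^ 2)). field. lra.
Qed.

Lemma tan_half_asin_1 : tan_half_asin 1 = 1.
Proof. unfold tan_half_asin. replace (1 - 1 ^ 2) with 0 by ring. rewrite sqrt_0. field. Qed.

Lemma tan_half_asin_m1 : tan_half_asin (-1) = -1.
Proof. unfold tan_half_asin. replace (1 - (-1) ^ 2) with 0 by ring. rewrite sqrt_0. field. Qed.

Lemma is_derive_tan_half_asin z : -1 < z < 1 ->
  is_derive tan_half_asin z (/ (sqrt (1 - z ^ 2) * (1 + sqrt (1 - z ^ 2)))).
Proof.
  intros Hz. unfold tan_half_asin.
  assert (H0 : 0 < 1 - z ^ 2) by nra.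
  assert (Hs := sqrt_sqrt _ (Rlt_le _ _ H0)). assert (Hp := sqrt_lt_R0 _ H0).
  auto_derive; change (1 + - (z * (z * 1))) with (1 - z ^ 2).
  - repeat split; lra.
  - set (S := sqrt (1 - z ^ 2)) in *.
    field_simplify_eq; [|lra]. replace (z ^ 2) with (1 - S * S) by lra. ring.
Qed.

Lemma continuous_tan_half_asin z : continuous tan_half_asin z.
Proof.
  unfold tan_half_asin.
  apply (continuous_mult (fun z => z) (fun z => / (1 + sqrt (1 - z ^ 2)))).
  - apply continuous_id.
  - apply (continuous_comp (fun z => 1 + sqrt (1 - z ^ 2)) Rinv).
    + apply (continuous_comp (fun z => 1 - z ^ 2) (fun u => 1 + sqrt u)).
      * apply (ex_derive_continuous (K := R_AbsRing) (V := R_NormedModule) (fun z => 1 - z ^ 2)).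
        auto_derive. easy.
      * apply (continuous_plus (fun _ => 1) sqrt); [apply continuous_const | apply continuous_sqrt].
    + apply continuous_Rinv. assert (Hp := sqrt_pos (1 - z ^ 2)). lra.
Qed.

Lemma RInt_even_part (f : R -> R) a : (forall x, continuous f x) ->
  RInt f (- a) a = RInt (fun w => f w + f (- w)) 0 a.
Proof.
  intros Hf.
  assert (Hex : forall u v, ex_RInt f u v)
    by (intros u v; apply (ex_RInt_continuous (V := R_CompleteNormedModule)); auto).
  assert (Hcomp : forall g : R -> R, (forall x, continuous g x) -> forall x, continuous (fun w => g (- w)) x).
  { intros g Hg x. apply (continuous_comp Ropp g); [|apply Hg].
    apply (ex_derive_continuous (K := R_AbsRing) (V := R_NormedModule)). auto_derive. easy. }
  assert (Hrefl : RInt (fun w => f (- w)) 0 a = RInt f (- a) 0).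
  { rewrite <- (opp_RInt_swap (V := R_CompleteNormedModule) f) by apply Hex.
    replace (RInt f 0 (- a)) with (RInt f (-1 * 0 + 0) (-1 * a + 0)) by (f_equal; ring).
    rewrite <- RInt_comp_lin by (rewrite Rmult_0_r, !Rplus_0_r; apply Hex).
    rewrite <- RInt_opp.
    - apply RInt_ext. intros x _. unfold scal, opp; simpl. unfold mult; simpl.
      replace (-1 * x + 0) with (- x) by ring. ring.
    - apply (ex_RInt_continuous (V := R_CompleteNormedModule)). intros x _.
      apply (continuous_scal_r (-1) (fun y => f (-1 * y + 0))).
      apply (continuous_ext (fun w => f (- w))); [intros; f_equal; ring | apply Hcomp, Hf]. }
  rewrite (RInt_plus (V := R_CompleteNormedModule)).
  - rewrite Hrefl, <- (RInt_Chasles (V := R_CompleteNormedModule) f (- a) 0 a) by apply Hex.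
    unfold plus; simpl. ring.
  - apply Hex.
  - apply (ex_RInt_continuous (V := R_CompleteNormedModule)). intros x _. apply Hcomp, Hf.
Qed.

Lemma period_kernel_tan_half_asin x1 x2 z : -1 <= z <= 1 ->
  period_kernel x1 x2 (tan_half_asin z) = (1 + sqrt (1 - z ^ 2)) * sqrt_odds (chord x1 x2 z).
Proof.
  intros Hz. unfold period_kernel.
  rewrite sin2atan_tan_half_asin, sqr_tan_half_asin by exact Hz.
  assert (Hp := sqrt_pos (1 - z ^ 2)). field. lra.
Qed.

Lemma period_kernel_even_part x1 x2 w :
  period_kernel x1 x2 w + period_kernel x1 x2 (- w) = 2 / (1 + w ^ 2) * odds_pair (sin2atan w) x1 x2.
Proof.
  unfold period_kernel, odds_pair.
  replace (sin2atan (- w)) with (- sin2atan w) by (unfold sin2atan; field; nra).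
  replace ((- w) ^ 2) with (w ^ 2) by ring. ring.
Qed.

Section PeriodKernel.

Variables x1 x2 : R.
Hypothesis Hx : 0 < x1 < x2.
Hypothesis Hx2 : x2 < 1.

Lemma continuous_period_kernel w : continuous (period_kernel x1 x2) w.
Proof.
  apply (ex_derive_continuous (K := R_AbsRing) (V := R_NormedModule)).
  assert (Hs := sin2atan_bound w).
  assert (Hc : 0 < chord x1 x2 (sin2atan w) < 1) by (unfold chord; split; nra).
  unfold period_kernel, sqrt_odds, chord, sin2atan in *.
  assert (Hw : 0 < 1 + w ^ 2) by nra.
  auto_derive. change (w * (w * 1)) with (w ^ 2). unfold Rminus, Rdiv in Hc.
  repeat split; try lra.
  apply Rdiv_lt_0_compat; lra.
Qed.

Lemma ex_RInt_period_kernel a b : ex_RInt (period_kernel x1 x2) a b.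
Proof.
  apply (ex_RInt_continuous (V := R_CompleteNormedModule)). intros w _.
  apply continuous_period_kernel.
Qed.

Lemma continuous_period_kernel_even_part w :
  continuous (fun w => period_kernel x1 x2 w + period_kernel x1 x2 (- w)) w.
Proof.
  apply (continuous_plus (period_kernel x1 x2) (fun w => period_kernel x1 x2 (- w)));
    [apply continuous_period_kernel | apply (continuous_comp Ropp); [|apply continuous_period_kernel]].
  apply (ex_derive_continuous (K := R_AbsRing) (V := R_NormedModule)). auto_derive. easy.
Qed.

End PeriodKernel.

Lemma RInt_period_kernel_lt x1 x2 x1' x2' : 0 < x1 < x2 -> 0 < x1' < x2' -> x2' < 1 ->
  x2 < x2' -> x1 * x2 < x1' * x2' ->
  RInt (period_kernel x1 x2) (-1) 1 < RInt (period_kernel x1' x2') (-1) 1.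
Proof.
  intros Hx Hx' Hx2' H2 H12.
  rewrite !(RInt_even_part _ 1) by (intros; apply continuous_period_kernel; lra).
  apply RInt_lt; [lra | intros; apply continuous_period_kernel_even_part; lra ..|].
  intros w Hw. rewrite !period_kernel_even_part.
  apply Rmult_lt_compat_l; [apply Rdiv_lt_0_compat; nra|].
  apply odds_pair_lt; try apply sin2atan_unit; lra.
Qed.

Lemma continuous_open_interval_ext (f g : R -> R) a b x : a < x < b ->
  (forall y, a < y < b -> f y = g y) -> continuous g x -> continuous f x.
Proof.
  intros Hx Hfg. apply continuous_ext_loc.
  apply (filter_imp (fun y => a < y < b)); [intros; symmetry; auto|].
  apply (locally_interval _ _ a b); simpl; intros; lra.
Qed.

Lemma is_RInt_gen_primitive (f F : R -> R) a b : a < b ->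
  (forall x, a < x < b -> is_derive F x (f x)) ->
  (forall x, a < x < b -> continuous f x) ->
  continuous F a -> continuous F b ->
  is_RInt_gen f (at_right a) (at_left b) (F b - F a).
Proof.
  intros Hab HF Hf Ha Hb.
  assert (Hra : at_right a (fun u => a < u < b))
    by (apply (locally_interval _ _ m_infty b); simpl; auto; lra).
  assert (Hlb : at_left b (fun u => a < u < b))
    by (apply (locally_interval _ _ a p_infty); simpl; auto; lra).
  assert (Hin : forall u v x, a < u < b -> a < v < b -> Rmin u v <= x <= Rmax u v -> a < x < b).
  { intros u v x Hu Hv [Hx1 Hx2]. split.
    - apply Rlt_le_trans with (Rmin u v); [apply Rmin_glb_lt|]; lra.
    - apply Rle_lt_trans with (Rmax u v); [|apply Rmax_lub_lt]; lra. }
  assert (HD : forall x, a < x < b -> Derive F x = f x) by (intros; apply is_derive_unique, HF; auto).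
  apply (is_RInt_gen_ext (Derive F)).
  - apply (Filter_prod _ _ _ _ _ Hra Hlb). intros u v Hu Hv x Hx. simpl in Hx.
    apply HD, (Hin u v x Hu Hv). lra.
  - apply is_RInt_gen_Derive.
    + apply (Filter_prod _ _ _ _ _ Hra Hlb). intros u v Hu Hv x Hx.
      eexists. apply HF, (Hin u v x Hu Hv Hx).
    + apply (Filter_prod _ _ _ _ _ Hra Hlb). intros u v Hu Hv x Hx.
      apply (continuous_open_interval_ext _ f a b); [apply (Hin u v x Hu Hv Hx) | exact HD |].
      apply Hf, (Hin u v x Hu Hv Hx).
    + apply (filterlim_filter_le_1 (F := locally a)); [apply filter_le_within | exact Ha].
    + apply (filterlim_filter_le_1 (F := locally b)); [apply filter_le_within | exact Hb].
Qed.

Definition chord_param (p q y : R) : R := (2 * y - p - q) / (q - p).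

Definition inv_sqrt_cubic (p q r y : R) : R := / sqrt ((y - p) * (q - y) * (r - y) / y).

Lemma inv_sqrt_cubic_chord p q r y : 0 < p < q -> q < r -> p < y < q ->
  inv_sqrt_cubic p q r y
  = 2 / (q - p) * sqrt_odds (chord (p / r) (q / r) (chord_param p q y))
    / sqrt (1 - chord_param p q y ^ 2).
Proof.
  intros Hpq Hqr Hy. set (z := chord_param p q y).
  set (h := (q - p) / 2).
  assert (Hz : 1 - z ^ 2 = (y - p) * (q - y) / h ^ 2) by (unfold z, h, chord_param; field; lra).
  assert (Hc : chord (p / r) (q / r) z = y / r) by (unfold chord, z, chord_param; field; lra).
  rewrite Hc, Hz. unfold inv_sqrt_cubic, sqrt_odds.
  replace (y / r / (1 - y / r)) with (y / (r - y)) by (field; lra).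
  replace ((y - p) * (q - y) * (r - y) / y) with ((y - p) * (q - y) / h ^ 2 * (h ^ 2 * ((r - y) / y)))
    by (unfold h; field; lra).
  assert (Hpy : 0 < (y - p) * (q - y) / h ^ 2) by (apply Rdiv_lt_0_compat; unfold h; nra).
  assert (Hry : 0 < (r - y) / y) by (apply Rdiv_lt_0_compat; lra).
  rewrite sqrt_mult_alt, sqrt_mult_alt, sqrt_pow2 by (lra || apply pow2_ge_0 || (unfold h; lra)).
  replace (y / (r - y)) with (/ ((r - y) / y)) by (field; lra).
  rewrite sqrt_inv.
  assert (sqrt ((y - p) * (q - y) / h ^ 2) > 0) by (apply sqrt_lt_R0; exact Hpy).
  assert (sqrt ((r - y) / y) > 0) by (apply sqrt_lt_R0; exact Hry).
  unfold h in *. field. repeat split; lra.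
Qed.

Lemma normalized_roots_bound p q r : 0 < p < q -> q < r -> 0 < p / r < q / r /\ q / r < 1.
Proof.
  intros Hpq Hqr.
  assert (Hp := ratio_unit p r ltac:(lra)). assert (Hq := ratio_unit q r ltac:(lra)).
  split; [split; [lra|] | lra].
  apply Rmult_lt_compat_r; [apply Rinv_0_lt_compat|]; lra.
Qed.

(* Comes from the substitution [c - x = chord p q (sin2atan w)]; unlike the integrand it is
   continuous at the endpoints [c - q] and [c - p]. *)
Definition period_primitive (p q r c x : R) : R :=
  - RInt (period_kernel (p / r) (q / r)) 0 (tan_half_asin (chord_param p q (c - x))).

Section PeriodPrimitive.

Variables p q r c : R.
Hypothesis Hpq : 0 < p < q.
Hypothesis Hqr : q < r.

Lemma is_derive_RInt_period_kernel w :
  is_derive (fun w => RInt (period_kernel (p / r) (q / r)) 0 w) w (period_kernel (p / r) (q / r) w).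
Proof.
  destruct (normalized_roots_bound p q r Hpq Hqr) as [Hx Hx2].
  apply (is_derive_RInt _ _ 0); [|apply continuous_period_kernel; tauto].
  apply filter_forall. intros. apply (RInt_correct (V := R_CompleteNormedModule)).
  apply ex_RInt_period_kernel; tauto.
Qed.

Lemma continuous_period_primitive x : continuous (period_primitive p q r c) x.
Proof.
  unfold period_primitive.
  apply (continuous_opp (fun x => RInt (period_kernel (p / r) (q / r)) 0
                                      (tan_half_asin (chord_param p q (c - x))))).
  apply (continuous_comp (fun x => chord_param p q (c - x))
                         (fun z => RInt (period_kernel (p / r) (q / r)) 0 (tan_half_asin z))).
  - apply (ex_derive_continuous (K := R_AbsRing) (V := R_NormedModule)).
    unfold chord_param. auto_derive. lra.
  - apply (continuous_comp tan_half_asin (fun w => RInt (period_kernel (p / r) (q / r)) 0 w)).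
    + apply continuous_tan_half_asin.
    + apply (ex_derive_continuous (K := R_AbsRing) (V := R_NormedModule)).
      eexists. apply is_derive_RInt_period_kernel.
Qed.

Lemma is_derive_period_primitive x : c - q < x < c - p ->
  is_derive (period_primitive p q r c) x (inv_sqrt_cubic p q r (c - x)).
Proof.
  intros Hx.
  set (z := chord_param p q (c - x)).
  assert (Hz : -1 < z < 1).
  { unfold z, chord_param. split.
    - apply Rmult_lt_reg_r with (q - p); [lra|].
      unfold Rdiv. rewrite Rmult_assoc, Rinv_l; lra.
    - apply Rmult_lt_reg_r with (q - p); [lra|].
      unfold Rdiv. rewrite Rmult_assoc, Rinv_l; lra. }
  assert (HS : 0 < sqrt (1 - z ^ 2)) by (apply sqrt_lt_R0; nra).
  set (S := sqrt (1 - z ^ 2)) in *.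
  replace (inv_sqrt_cubic p q r (c - x))
    with (- ((- 2 / (q - p) * / (S * (1 + S))) * period_kernel (p / r) (q / r) (tan_half_asin z)))
    by (rewrite inv_sqrt_cubic_chord, period_kernel_tan_half_asin by lra; fold z S; field; lra).
  unfold period_primitive.
  apply (is_derive_opp (fun x => RInt (period_kernel (p / r) (q / r)) 0
                                   (tan_half_asin (chord_param p q (c - x))))).
  apply (is_derive_comp (fun w => RInt (period_kernel (p / r) (q / r)) 0 w)
                        (fun x => tan_half_asin (chord_param p q (c - x))));
    [apply is_derive_RInt_period_kernel|].
  apply (is_derive_comp tan_half_asin (fun x => chord_param p q (c - x)));
    [apply is_derive_tan_half_asin; exact Hz|].
  unfold chord_param. auto_derive; [lra | field; lra].
Qed.

Lemma continuous_inv_sqrt_cubic x : c - q < x < c - p ->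
  continuous (fun x => inv_sqrt_cubic p q r (c - x)) x.
Proof.
  intros Hx. apply (ex_derive_continuous (K := R_AbsRing) (V := R_NormedModule)).
  assert (Hpos : 0 < ((c - x) - p) * (q - (c - x)) * (r - (c - x)) / (c - x))
    by (apply Rdiv_lt_0_compat; [repeat apply Rmult_lt_0_compat|]; lra).
  assert (Hsq := sqrt_lt_R0 _ Hpos).
  unfold inv_sqrt_cubic, Rminus, Rdiv in *. auto_derive. repeat split; lra.
Qed.

Lemma is_RInt_gen_inv_sqrt_cubic (f : R -> R) :
  (forall x, c - q < x < c - p -> f x = inv_sqrt_cubic p q r (c - x)) ->
  is_RInt_gen f (at_right (c - q)) (at_left (c - p)) (RInt (period_kernel (p / r) (q / r)) (-1) 1).
Proof.
  intros Hf.
  destruct (normalized_roots_bound p q r Hpq Hqr) as [Hx Hx2].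
  replace (RInt (period_kernel (p / r) (q / r)) (-1) 1)
    with (period_primitive p q r c (c - p) - period_primitive p q r c (c - q)).
  - apply is_RInt_gen_primitive; [lra | | | apply continuous_period_primitive ..].
    + intros x Hx'. rewrite Hf by exact Hx'. apply is_derive_period_primitive, Hx'.
    + intros x Hx'. apply (continuous_open_interval_ext _ _ (c - q) (c - p) x Hx' Hf).
      apply continuous_inv_sqrt_cubic, Hx'.
  - unfold period_primitive, chord_param.
    replace ((2 * (c - (c - p)) - p - q) / (q - p)) with (-1) by (field; lra).
    replace ((2 * (c - (c - q)) - p - q) / (q - p)) with 1 by (field; lra).
    rewrite tan_half_asin_1, tan_half_asin_m1.
    rewrite <- (RInt_Chasles (V := R_CompleteNormedModule) _ (-1) 0 1)
      by (apply ex_RInt_period_kernel; tauto).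
    rewrite <- (opp_RInt_swap (V := R_CompleteNormedModule) _ (-1) 0)
      by (apply ex_RInt_period_kernel; tauto).
    unfold plus, opp; simpl. ring.
Qed.

End PeriodPrimitive.

Lemma U_shift C1 C2 C3 y : y <> 0 ->
  U C1 C2 C3 (C1 - y) = - y ^ 2 / 2 + (C1 + C2 / 2) * y + C3 / (2 * y) - C1 ^ 2 / 2 - C1 * C2.
Proof. intros Hy. unfold U. field. split; [|lra]. intro H. apply Hy. lra. Qed.

Definition level_cubic (C1 C2 C3 b p q r : R) : Prop :=
  forall y, y <> 0 -> 2 * (b - U C1 C2 C3 (C1 - y)) = (y - p) * (y - q) * (y - r) / y.

(* [2 y (b - U (C1 - y))] is a monic cubic in [y] with constant term [- C3], whose
   root sum is [2 C1 + C2]. *)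
Lemma U_level_factor C1 C2 C3 b p q : 0 < p < q ->
  U C1 C2 C3 (C1 - p) = b -> U C1 C2 C3 (C1 - q) = b ->
  p * q * (2 * C1 + C2 - p - q) = C3 /\ level_cubic C1 C2 C3 b p q (2 * C1 + C2 - p - q).
Proof.
  intros Hpq Hp Hq.
  set (a := C1 + C2 / 2). set (K := C1 ^ 2 / 2 + C1 * C2).
  assert (EC3p : C3 = 2 * p * (b + p ^ 2 / 2 - a * p + K))
    by (rewrite <- Hp, U_shift by lra; unfold a, K; field; lra).
  assert (EC3q : C3 = 2 * q * (b + q ^ 2 / 2 - a * q + K))
    by (rewrite <- Hq, U_shift by lra; unfold a, K; field; lra).
  assert (Eb : b = (2 * a * (p + q) - p ^ 2 - p * q - q ^ 2) / 2 - K).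
  { assert (Hdiff : (p - q) * (p ^ 2 + p * q + q ^ 2 - 2 * a * (p + q) + 2 * b + 2 * K) = 0)
      by (transitivity (2 * p * (b + p ^ 2 / 2 - a * p + K) - 2 * q * (b + q ^ 2 / 2 - a * q + K));
          [field | lra]).
    apply Rmult_integral in Hdiff. destruct Hdiff; lra. }
  assert (EC3 : C3 = p * q * (2 * C1 + C2 - p - q)) by (rewrite EC3p, Eb; unfold a; field).
  split; [lra|].
  intros y Hy. rewrite U_shift by exact Hy. rewrite EC3, Eb. unfold a, K. field. exact Hy.
Qed.

Lemma pos_of_pos_prod3 u v w y : 0 < y -> 0 < u -> 0 < v -> 0 < u * v * w / y -> 0 < w.
Proof.
  intros Hy Hu Hv H.
  assert (0 < u * v * w) by (replace (u * v * w) with (u * v * w / y * y) by (field; lra); nra).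
  destruct (Rlt_or_le 0 w) as [Hw | Hw]; [exact Hw|].
  assert (u * v * w <= 0) by (assert (0 < u * v) by nra; nra). lra.
Qed.

Lemma level_cubic_root C1 C2 C3 b p q r y : y <> 0 -> level_cubic C1 C2 C3 b p q r ->
  (y = p \/ y = q \/ y = r) -> U C1 C2 C3 (C1 - y) = b.
Proof.
  intros Hy Hcub Hroot. specialize (Hcub y Hy).
  assert (Hzero : (y - p) * (y - q) * (y - r) = 0)
    by (destruct Hroot as [-> | [-> | ->]]; ring).
  rewrite Hzero in Hcub. unfold Rdiv in Hcub. lra.
Qed.

(* Raising the level [b] pushes the middle root [q] up and the largest root [r] down:
   evaluate the cubic of [b'] at the roots [q] and [r] of the cubic of [b]. *)
Lemma level_cubic_roots_shift C1 C2 C3 b b' p q r p' q' r' : b < b' ->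
  0 < p < q -> q < r -> 0 < p' -> p' < q -> q < r' -> q' < r ->
  level_cubic C1 C2 C3 b p q r -> level_cubic C1 C2 C3 b' p' q' r' -> q < q' /\ r' < r.
Proof.
  intros Hbb' Hpq Hqr Hp' Hp'q Hqr' Hq'r Hcub Hcub'.
  assert (Hq : U C1 C2 C3 (C1 - q) = b) by (apply (level_cubic_root C1 C2 C3 b p q r); auto; lra).
  assert (Hr : U C1 C2 C3 (C1 - r) = b) by (apply (level_cubic_root C1 C2 C3 b p q r); auto; lra).
  split.
  - assert (Hq' := Hcub' q ltac:(lra)). rewrite Hq in Hq'.
    apply Rlt_0_minus, (pos_of_pos_prod3 (q - p') (r' - q) _ q); [lra | lra | lra |].
    replace ((q - p') * (r' - q) * (q' - q) / q) with ((q - p') * (q - q') * (q - r') / q)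
      by (field; lra).
    lra.
  - assert (Hr' := Hcub' r ltac:(lra)). rewrite Hr in Hr'.
    apply Rlt_0_minus, (pos_of_pos_prod3 (r - p') (r - q') _ r); lra.
Qed.

Lemma turning_points_roots C1 C2 C3 phi1 phi2 b phim phip : b < U C1 C2 C3 phi1 ->
  turning_points C1 C2 C3 phi1 phi2 b phim phip ->
  exists p q r, phip = C1 - p /\ phim = C1 - q /\
    0 < p < C1 - phi2 /\ C1 - phi2 < q < C1 - phi1 /\ C1 - phi1 < r /\
    p * q * r = C3 /\ level_cubic C1 C2 C3 b p q r.
Proof.
  intros Hb1 (Hm & Hp & Um & Up).
  set (p := C1 - phip). set (q := C1 - phim). set (y1 := C1 - phi1).
  assert (Hpq : 0 < p < q) by (unfold p, q; lra).
  destruct (U_level_factor C1 C2 C3 b p q Hpq) as [Hpqr Hcub];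
    [unfold p; rewrite <- Up; f_equal; ring | unfold q; rewrite <- Um; f_equal; ring |].
  exists p, q, (2 * C1 + C2 - p - q).
  split; [unfold p; ring|]. split; [unfold q; ring|].
  split; [unfold p; split; lra|]. split; [unfold q, y1; split; lra|].
  split; [|split; [exact Hpqr | exact Hcub]].
  assert (H1 := Hcub y1 ltac:(unfold y1; lra)).
  replace (C1 - y1) with phi1 in H1 by (unfold y1; ring).
  apply Rlt_0_minus, (pos_of_pos_prod3 (y1 - p) (y1 - q) _ y1); try (unfold y1, p, q; lra).
  replace ((y1 - p) * (y1 - q) * (2 * C1 + C2 - p - q - y1) / y1)
    with (- ((y1 - p) * (y1 - q) * (y1 - (2 * C1 + C2 - p - q)) / y1)) by (field; unfold y1; lra).
  lra.
Qed.

Lemma is_RInt_gen_period_integrand C1 C2 C3 b p q r : 0 < p < q -> q < r ->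
  level_cubic C1 C2 C3 b p q r ->
  is_RInt_gen (period_integrand C1 C2 C3 b) (at_right (C1 - q)) (at_left (C1 - p))
    (RInt (period_kernel (p / r) (q / r)) (-1) 1).
Proof.
  intros Hpq Hqr Hcub. apply is_RInt_gen_inv_sqrt_cubic; [exact Hpq | exact Hqr |].
  intros x Hx. unfold period_integrand, inv_sqrt_cubic.
  replace (U C1 C2 C3 x) with (U C1 C2 C3 (C1 - (C1 - x))) by (f_equal; ring).
  rewrite Hcub by lra. do 2 f_equal. field. lra.
Qed.

Lemma RInt_period_kernel_roots_lt p q r p' q' r' : 0 < p < q -> q < r -> 0 < p' < q' -> q' < r' ->
  q < q' -> r' < r -> p * q * r = p' * q' * r' ->
  RInt (period_kernel (p / r) (q / r)) (-1) 1 < RInt (period_kernel (p' / r') (q' / r')) (-1) 1.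
Proof.
  intros Hpq Hqr Hpq' Hqr' Hqq' Hrr' Hprod.
  destruct (normalized_roots_bound p q r Hpq Hqr) as [Hx _].
  destruct (normalized_roots_bound p' q' r' Hpq' Hqr') as [Hx' Hx2'].
  apply RInt_period_kernel_lt; [exact Hx | exact Hx' | exact Hx2' | |].
  - apply Rlt_le_trans with (q' / r).
    + apply Rmult_lt_compat_r; [apply Rinv_0_lt_compat|]; lra.
    + apply Rmult_le_compat_l; [lra|]. left. apply Rinv_lt_contravar; nra.
  - replace (p / r * (q / r)) with (p' * q' * r' / r ^ 3) by (rewrite <- Hprod; field; lra).
    replace (p' / r' * (q' / r')) with (p' * q' * r' / r' ^ 3) by (field; lra).
    apply Rmult_lt_compat_l; [assert (0 < p' * q') by nra; nra|].
    apply Rinv_lt_contravar; [apply Rmult_lt_0_compat; apply pow_lt; lra|].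
    assert (0 < (r - r') * (r * r + r * r' + r' * r')) by (apply Rmult_lt_0_compat; nra).
    replace (r ^ 3) with (r' ^ 3 + (r - r') * (r * r + r * r' + r' * r')) by ring. lra.
Qed.

Theorem theorem2 (C1 C2 C3 phi1 phi2 : R) :
  2 * C1 + C2 > 0 ->
  0 < C3 < C3crit C1 C2 ->
  (* phi1 < phi2 are the roots of the cubic lying below C1 *)
  phi1 < phi2 < C1 ->
  cubicP C1 C2 phi1 = C3 -> cubicP C1 C2 phi2 = C3 ->
  forall b b' phim phip phim' phip' : R,
    U C1 C2 C3 phi2 < b -> b < b' -> b' < U C1 C2 C3 phi1 ->
    turning_points C1 C2 C3 phi1 phi2 b phim phip ->
    turning_points C1 C2 C3 phi1 phi2 b' phim' phip' ->
    ex_RInt_gen (period_integrand C1 C2 C3 b) (at_right phim) (at_left phip) /\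
    ex_RInt_gen (period_integrand C1 C2 C3 b') (at_right phim') (at_left phip') /\
    period C1 C2 C3 b phim phip < period C1 C2 C3 b' phim' phip'.
Proof.
  intros _ _ _ _ _ b b' phim phip phim' phip' _ Hbb' Hb' T T'.
  destruct (turning_points_roots C1 C2 C3 phi1 phi2 b phim phip ltac:(lra) T)
    as (p & q & r & -> & -> & Hp & Hq & Hr & Hpqr & Hcub).
  destruct (turning_points_roots C1 C2 C3 phi1 phi2 b' phim' phip' Hb' T')
    as (p' & q' & r' & -> & -> & Hp' & Hq' & Hr' & Hpqr' & Hcub').
  assert (I := is_RInt_gen_period_integrand C1 C2 C3 b p q r ltac:(lra) ltac:(lra) Hcub).
  assert (I' := is_RInt_gen_period_integrand C1 C2 C3 b' p' q' r' ltac:(lra) ltac:(lra) Hcub').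
  assert (Hshift : q < q' /\ r' < r)
    by (apply (level_cubic_roots_shift C1 C2 C3 b b' p q r p' q' r'); auto; lra).
  split; [eexists; exact I|]. split; [eexists; exact I'|].
  unfold period. rewrite (is_RInt_gen_unique _ _ I), (is_RInt_gen_unique _ _ I').
  apply Rmult_lt_compat_l; [lra|].
  apply RInt_period_kernel_roots_lt; lra.
Qed.
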